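(* For every sequent $\Gamma\Rightarrow\Delta$ of the logic $\mathtt{TPDL}$: if $\Gamma\Rightarrow\Delta$ is provable in the sequent calculus $\mathtt{GTPDL}$, then $M\models\Gamma\Rightarrow\Delta$ for every model $M$ (i.e. $\Gamma\Rightarrow\Delta$ is valid).
   Context: Fix sets $\mathsf{Prop}$ of propositional variables and $\mathsf{AtProg}$ of atomic programs. Formulas and programs of $\mathtt{TPDL}$ are defined by mutual induction: $\varphi ::= \bot \mid p \mid (\varphi\to\varphi) \mid [\pi]\varphi \mid [\pi]^{\leftarrow}\varphi$ and $\pi ::= \alpha \mid \pi;\pi \mid \pi\cup\pi \mid \pi^{*} \mid \varphi?$, where $p\in\mathsf{Prop}$, $\alpha\in\mathsf{AtProg}$ ($[\pi]^{\leftarrow}$ is the backwards box). Abbreviations: $\neg\varphi:=\varphi\to\bot$, $\langle\pi\rangle\varphi:=\neg[\pi]\neg\varphi$, $\langle\pi\rangle^{\leftarrow}\varphi:=\neg[\pi]^{\leftarrow}\neg\varphi$; for a set $\Gamma$ of formulas, $[\pi]\Gamma=\{[\pi]\varphi:\varphi\in\Gamma\}$ and $[\pi]^{\leftarrow}\Gamma=\{[\pi]^{\leftarrow}\varphi:\varphi\in\Gamma\}$. A model is $M=(W,(R_\alpha)_{\alpha\in\mathsf{AtProg}},V)$ with $W$ a nonempty set of states, $R_\alpha\subseteq W\times W$, $V:W\to\mathcal P(\mathsf{Prop})$. Relations $R_\pi$: $R_{\pi_0;\pi_1}$ is the composition ($w R v$ iff $wR_{\pi_0}u R_{\pi_1}v$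 for some $u$), $R_{\pi_0\cup\pi_1}=R_{\pi_0}\cup R_{\pi_1}$, $R_{\pi^*}$ is the reflexive–transitive closure of $R_\pi$, $R_{\psi?}=\{(w,w):M,w\models\psi\}$. Satisfaction: $M,w\not\models\bot$; $M,w\models p$ iff $p\in V(w)$; $\to$ classical; $M,w\models[\pi]\varphi$ iff $M,v\models\varphi$ for all $v$ with $wR_\pi v$; $M,w\models[\pi]^{\leftarrow}\varphi$ iff $M,v\models\varphi$ for all $v$ with $vR_\pi w$. A sequent $\Gamma\Rightarrow\Delta$ is a pair of finite sets of formulas (commas denote union). $M,w\models\Gamma\Rightarrow\Delta$ means: if $M,w\models\varphi$ for all $\varphi\in\Gamma$ then $M,w\models\psi$ for some $\psi\in\Delta$; $M\models\Gamma\Rightarrow\Delta$ means this holds at every state; valid means $M\models\Gamma\Rightarrow\Delta$ for every model $M$. $\mathtt{GTPDL}$ rules (premises / conclusion): (Ax) no premise, conclusion $\Gamma\Rightarrow\Delta$ with $\Gamma\cap\Delta\neq\emptyset$; ($\bot$) no premise, conclusion $\Gamma,\bot\Rightarrow\Delta$; ($\to$L) $\Gamma\Rightarrow\varphi,\Delta$ and $\Gamma,\psi\Rightarrow\Delta$ / $\Gamma,\varphi\to\psi\Rightarrow\Delta$; ($\to$R) $\Gamma,\varphi\Rightarrow\psi,\Delta$ / $\Gamma\Rightarrow\varphi\to\psi,\Delta$; (Wk) $\Gamma\Rightarrow\Delta$ / $\Gamma'\Rightarrow\Delta'$ with $\Gamma\subseteq\Gamma'$, $\Delta\subseteq\Delta'$;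 (Cut) $\Gamma\Rightarrow\varphi,\Delta$ and $\Gamma,\varphi\Rightarrow\Delta$ / $\Gamma\Rightarrow\Delta$; ($[\,]$) $\Gamma\Rightarrow\varphi,[\pi]^{\leftarrow}\Delta$ / $[\pi]\Gamma\Rightarrow[\pi]\varphi,\Delta$; ($[\,]^{\leftarrow}$) $\Gamma\Rightarrow\varphi,[\pi]\Delta$ / $[\pi]^{\leftarrow}\Gamma\Rightarrow[\pi]^{\leftarrow}\varphi,\Delta$; ($[;]$L) $\Gamma,[\pi_0][\pi_1]\varphi\Rightarrow\Delta$ / $\Gamma,[\pi_0;\pi_1]\varphi\Rightarrow\Delta$; ($[;]$R) $\Gamma\Rightarrow[\pi_0][\pi_1]\varphi,\Delta$ / $\Gamma\Rightarrow[\pi_0;\pi_1]\varphi,\Delta$; ($[\cup]$L) $\Gamma,[\pi_0]\varphi,[\pi_1]\varphi\Rightarrow\Delta$ / $\Gamma,[\pi_0\cup\pi_1]\varphi\Rightarrow\Delta$; ($[\cup]$R) $\Gamma\Rightarrow\Delta,[\pi_0]\varphi$ and $\Gamma\Rightarrow\Delta,[\pi_1]\varphi$ / $\Gamma\Rightarrow[\pi_0\cup\pi_1]\varphi,\Delta$; ($[*]$L) $\Gamma,\varphi,[\pi][\pi^*]\varphi\Rightarrow\Delta$ / $\Gamma,[\pi^*]\varphi\Rightarrow\Delta$; ($[*]$R) $\Gamma,\varphi\Rightarrow[\pi]\varphi$ / $[\pi^*]\Gamma,\varphi\Rightarrow[\pi^*]\varphi$; ($[?]$L) $\Gamma\Rightarrow\varphi,\Delta$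 and $\Gamma,\psi\Rightarrow\Delta$ / $\Gamma,[\varphi?]\psi\Rightarrow\Delta$; ($[?]$R) $\Gamma,\varphi\Rightarrow\psi,\Delta$ / $\Gamma\Rightarrow[\varphi?]\psi,\Delta$. A $\mathtt{GTPDL}$ proof of a sequent is a finite tree of sequents with that sequent at the root, each node being the conclusion of an instance of a rule whose premises are its children (so every leaf is an instance of Ax or $\bot$); a sequent is provable in $\mathtt{GTPDL}$ if it has such a proof. *)

From Stdlib Require Import List Relations.
Import ListNotations.
Set Implicit Arguments.

Section TPDL.
Variables (Prop_ AtProg : Type).

Inductive form : Type :=
| Bot : form
| Var : Prop_ -> form
| Imp : form -> form -> form
| Box : prog -> form -> form
| BBox : prog -> form -> form
with prog : Type :=
| Atom : AtProg -> prog
| Seq : prog -> prog -> prog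
| Choice : prog -> prog -> prog
| Star : prog -> prog
| Test : form -> prog.

Record model : Type := Model {
  W : Type;
  W_nonempty : inhabited W;
  R : AtProg -> W -> W -> Prop;
  V : W -> Prop_ -> Prop
}.

Fixpoint sat (M : model) (w : W M) (phi : form) {struct phi} : Prop :=
  match phi with
  | Bot => False
  | Var p => V M w p
  | Imp a b => sat M w a -> sat M w b
  | Box pi a => forall v, rel M pi w v -> sat M v a
  | BBox pi a => forall v, rel M pi v w -> sat M v a
  end
with rel (M : model) (pi : prog) {struct pi} : W M -> W M -> Prop :=
  match pi with
  | Atom al => R M al
  | Seq p q => fun w v => exists u, rel M p w u /\ rel M q u v
  | Choice p q => fun w v => rel M p w v \/ rel M q w v
  | Star p => clos_refl_trans (W M) (rel M p)
  | Test a => fun w v => w = v /\ sat M w a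
  end.

(* A sequent is a pair of finite sets of formulas, represented by lists
   (only membership matters). *)
Definition sat_seq (M : model) (w : W M) (G D : list form) : Prop :=
  (forall phi, In phi G -> sat M w phi) -> exists psi, In psi D /\ sat M w psi.

Definition model_sat_seq (M : model) (G D : list form) : Prop :=
  forall w : W M, sat_seq M w G D.

Definition valid (G D : list form) : Prop :=
  forall M : model, model_sat_seq M G D.

Inductive provable : list form -> list form -> Prop :=
| r_Ax : forall G D phi, In phi G -> In phi D -> provable G D
| r_Bot : forall G D, provable (Bot :: G) D
| r_ImpL : forall G D a b,
    provable G (a :: D) -> provable (b :: G) D -> provable (Imp a b :: G) D
| r_ImpR : forall G D a b,
    provable (a :: G) (b :: D) -> provable G (Imp a b :: D)
| r_Wk : forall G D G' D',
    provable G D -> incl G G' -> incl D D' -> provable G' D'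
| r_Cut : forall G D a,
    provable G (a :: D) -> provable (a :: G) D -> provable G D
| r_Box : forall G D pi a,
    provable G (a :: map (BBox pi) D) ->
    provable (map (Box pi) G) (Box pi a :: D)
| r_BBox : forall G D pi a,
    provable G (a :: map (Box pi) D) ->
    provable (map (BBox pi) G) (BBox pi a :: D)
| r_SeqL : forall G D p q a,
    provable (Box p (Box q a) :: G) D -> provable (Box (Seq p q) a :: G) D
| r_SeqR : forall G D p q a,
    provable G (Box p (Box q a) :: D) -> provable G (Box (Seq p q) a :: D)
| r_ChoiceL : forall G D p q a,
    provable (Box p a :: Box q a :: G) D -> provable (Box (Choice p q) a :: G) D
| r_ChoiceR : forall G D p q a,
    provable G (Box p a :: D) -> provable G (Box q a :: D) ->
    provable G (Box (Choice p q) a :: D)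
| r_StarL : forall G D p a,
    provable (a :: Box p (Box (Star p) a) :: G) D ->
    provable (Box (Star p) a :: G) D
| r_StarR : forall G p a,
    provable (a :: G) [Box p a] ->
    provable (a :: map (Box (Star p)) G) [Box (Star p) a]
| r_TestL : forall G D a b,
    provable G (a :: D) -> provable (b :: G) D ->
    provable (Box (Test a) b :: G) D
| r_TestR : forall G D a b,
    provable (a :: G) (b :: D) -> provable G (Box (Test a) b :: D).

End TPDL.

(* Every rule except [ ], [ ]^<- and
   [*]R preserves truth at each single state; those three need their premise
   at every state of the model.  The rules [ ] and [ ]^<- are sound because
   [pi] and [pi]^<- are adjoint: if [pi]^<- d holds at an R_pi-successor v of
   w, then d holds at w.  The rule [*]R is sound because its premise makes
   "phi and [pi^*]Gamma" invariant along R_pi-steps, hence along R_pi^*. *)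

From Stdlib Require Import List Relations Classical.
Import ListNotations.

Section Soundness.

Variables (Prop_ AtProg : Type) (M : model Prop_ AtProg).

Implicit Types (w : W M) (a b phi : form Prop_ AtProg)
  (G D : list (form Prop_ AtProg)) (p q pi : prog Prop_ AtProg).

Lemma sat_box_seq w p q a :
  sat M w (Box (Seq p q) a) <-> sat M w (Box p (Box q a)).
Proof.
  simpl; split.
  - intros H u Hwu v Huv; apply H; exists u; auto.
  - intros H v [u [Hwu Huv]]; exact (H u Hwu v Huv).
Qed.

Lemma sat_box_choice w p q a :
  sat M w (Box (Choice p q) a) <-> sat M w (Box p a) /\ sat M w (Box q a).
Proof. simpl; firstorder. Qed.

Lemma sat_box_test w a b :
  sat M w (Box (Test a) b) <-> (sat M w a -> sat M w b).
Proof.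
  simpl; split.
  - intros H Ha; exact (H w (conj eq_refl Ha)).
  - intros H v [<- Ha]; auto.
Qed.

Lemma sat_box_star_unfold {w p a} :
  sat M w (Box (Star p) a) -> sat M w a /\ sat M w (Box p (Box (Star p) a)).
Proof.
  simpl; intros H; split.
  - apply H, rt_refl.
  - intros u Hwu v Huv; apply H, rt_trans with u; [apply rt_step|]; assumption.
Qed.

Lemma sat_seq_consL w a G D :
  sat_seq M w (a :: G) D <-> (sat M w a -> sat_seq M w G D).
Proof.
  unfold sat_seq; split.
  - intros H Ha HG; apply H; intros phi [<- | Hphi]; auto.
  - intros H HaG; apply H; intros; apply HaG; simpl; auto.
Qed.

Lemma sat_seq_consR w G D a :
  sat_seq M w G (a :: D) <-> (~ sat M w a -> sat_seq M w G D).
Proof.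
  unfold sat_seq; split.
  - intros H Hna HG; destruct (H HG) as [psi [[<- | Hpsi] Hs]]; [contradiction|eauto].
  - intros H HG; destruct (classic (sat M w a)) as [Ha | Hna].
    + exists a; simpl; auto.
    + destruct (H Hna HG) as [psi [Hpsi Hs]]; exists psi; simpl; auto.
Qed.

Lemma sat_seq_ax w G D phi : In phi G -> In phi D -> sat_seq M w G D.
Proof. intros HG HD H; exists phi; auto. Qed.

Lemma sat_seq_bot w G D : sat_seq M w (Bot _ _ :: G) D.
Proof. apply sat_seq_consL; intros []. Qed.

Lemma sat_seq_weaken w G D G' D' :
  sat_seq M w G D -> incl G G' -> incl D D' -> sat_seq M w G' D'.
Proof.
  intros H HG HD HG'; destruct H as [psi [Hpsi Hs]]; auto.
  exists psi; auto.
Qed.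

Lemma sat_seq_cut w G D a :
  sat_seq M w G (a :: D) -> sat_seq M w (a :: G) D -> sat_seq M w G D.
Proof.
  rewrite sat_seq_consR, sat_seq_consL.
  destruct (classic (sat M w a)); tauto.
Qed.

Lemma sat_seq_impL w G D a b :
  sat_seq M w G (a :: D) -> sat_seq M w (b :: G) D ->
  sat_seq M w (Imp a b :: G) D.
Proof.
  rewrite sat_seq_consR, !sat_seq_consL; simpl.
  destruct (classic (sat M w a)); tauto.
Qed.

Lemma sat_seq_impR w G D a b :
  sat_seq M w (a :: G) (b :: D) -> sat_seq M w G (Imp a b :: D).
Proof.
  rewrite sat_seq_consL, !sat_seq_consR; simpl.
  destruct (classic (sat M w a)); tauto.
Qed.

Lemma sat_seq_seqL w G D p q a :
  sat_seq M w (Box p (Box q a) :: G) D -> sat_seq M w (Box (Seq p q) a :: G) D.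
Proof. rewrite !sat_seq_consL, sat_box_seq; tauto. Qed.

Lemma sat_seq_seqR w G D p q a :
  sat_seq M w G (Box p (Box q a) :: D) -> sat_seq M w G (Box (Seq p q) a :: D).
Proof. rewrite !sat_seq_consR, sat_box_seq; tauto. Qed.

Lemma sat_seq_choiceL w G D p q a :
  sat_seq M w (Box p a :: Box q a :: G) D ->
  sat_seq M w (Box (Choice p q) a :: G) D.
Proof. rewrite !sat_seq_consL, sat_box_choice; tauto. Qed.

Lemma sat_seq_choiceR w G D p q a :
  sat_seq M w G (Box p a :: D) -> sat_seq M w G (Box q a :: D) ->
  sat_seq M w G (Box (Choice p q) a :: D).
Proof.
  rewrite !sat_seq_consR, sat_box_choice.
  destruct (classic (sat M w (Box p a))); tauto.
Qed.

Lemma sat_seq_starL w G D p a :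
  sat_seq M w (a :: Box p (Box (Star p) a) :: G) D ->
  sat_seq M w (Box (Star p) a :: G) D.
Proof.
  rewrite !sat_seq_consL; intros H Hs.
  destruct (sat_box_star_unfold Hs); auto.
Qed.

Lemma sat_seq_testL w G D a b :
  sat_seq M w G (a :: D) -> sat_seq M w (b :: G) D ->
  sat_seq M w (Box (Test a) b :: G) D.
Proof.
  rewrite sat_seq_consR, !sat_seq_consL, sat_box_test.
  destruct (classic (sat M w a)); tauto.
Qed.

Lemma sat_seq_testR w G D a b :
  sat_seq M w (a :: G) (b :: D) -> sat_seq M w G (Box (Test a) b :: D).
Proof.
  rewrite sat_seq_consL, !sat_seq_consR, sat_box_test.
  destruct (classic (sat M w a)); tauto.
Qed.

Lemma model_sat_seq_adjoint (S : W M -> W M -> Prop)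
    (B B' : form Prop_ AtProg -> form Prop_ AtProg) :
  (forall w a, sat M w (B a) <-> forall v, S w v -> sat M v a) ->
  (forall w a, sat M w (B' a) <-> forall v, S v w -> sat M v a) ->
  forall G D a,
  model_sat_seq M G (a :: map B' D) -> model_sat_seq M (map B G) (B a :: D).
Proof.
  intros HB HB' G D a H w HG.
  destruct (classic (exists psi, In psi D /\ sat M w psi)) as [HD | HnD].
  { destruct HD as [psi [Hpsi Hs]]; exists psi; simpl; auto. }
  exists (B a); split; [left; reflexivity|].
  apply HB; intros v Hwv.
  destruct (H v) as [psi [[<- | Hpsi] Hs]]; [| assumption |].
  - intros phi Hphi; exact (proj1 (HB w phi) (HG _ (in_map B G phi Hphi)) v Hwv).
  - apply in_map_iff in Hpsi as [d [<- Hd]].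
    exfalso; apply HnD; exists d; split; [assumption|].
    exact (proj1 (HB' v d) Hs w Hwv).
Qed.

Lemma model_sat_seq_box G D pi a :
  model_sat_seq M G (a :: map (BBox pi) D) ->
  model_sat_seq M (map (Box pi) G) (Box pi a :: D).
Proof. apply (model_sat_seq_adjoint (rel M pi)); reflexivity. Qed.

Lemma model_sat_seq_bbox G D pi a :
  model_sat_seq M G (a :: map (Box pi) D) ->
  model_sat_seq M (map (BBox pi) G) (BBox pi a :: D).
Proof. apply (model_sat_seq_adjoint (fun w v => rel M pi v w)); reflexivity. Qed.

Lemma model_sat_seq_starR G p a :
  model_sat_seq M (a :: G) [Box p a] ->
  model_sat_seq M (a :: map (Box (Star p)) G) [Box (Star p) a].
Proof.
  intros H w; apply sat_seq_consL; intros Ha HG.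
  exists (Box (Star p) a); split; [left; reflexivity|].
  intros v Hwv.
  enough (Hinv : sat M v a /\ forall g, In g G -> sat M v (Box (Star p) g))
    by exact (proj1 Hinv).
  induction Hwv as [| x y Hwx [Hxa HxG] Hxy] using clos_refl_trans_ind_left.
  - split; [assumption|].
    intros g Hg; apply HG, in_map, Hg.
  - split.
    + destruct (H x) as [psi [[<- | []] Hs]]; [| exact (Hs y Hxy)].
      intros phi [<- | Hphi]; [assumption|].
      exact (proj1 (sat_box_star_unfold (HxG phi Hphi))).
    + intros g Hg; exact (proj2 (sat_box_star_unfold (HxG g Hg)) y Hxy).
Qed.

End Soundness.

Theorem mainTheorem1 (Prop_ AtProg : Type) (G D : list (form Prop_ AtProg)) :
  provable G D -> forall M : model Prop_ AtProg, model_sat_seq M G D.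
Proof.
  induction 1; intros M w.
  - apply sat_seq_ax with phi; assumption.
  - apply sat_seq_bot.
  - apply sat_seq_impL; [apply IHprovable1 | apply IHprovable2].
  - apply sat_seq_impR, IHprovable.
  - apply sat_seq_weaken with G D; [apply IHprovable | ..]; assumption.
  - apply sat_seq_cut with a; [apply IHprovable1 | apply IHprovable2].
  - apply model_sat_seq_box, IHprovable.
  - apply model_sat_seq_bbox, IHprovable.
  - apply sat_seq_seqL, IHprovable.
  - apply sat_seq_seqR, IHprovable.
  - apply sat_seq_choiceL, IHprovable.
  - apply sat_seq_choiceR; [apply IHprovable1 | apply IHprovable2].
  - apply sat_seq_starL, IHprovable.
  - apply model_sat_seq_starR, IHprovable.
  - apply sat_seq_testL; [apply IHprovable1 | apply IHprovable2].
  - apply sat_seq_testR, IHprovable.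
Qed.
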